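(* Let $\mathcal{L}$ and $\mathcal{L}'$ be lattices and $f,g:\mathbb{N}\to\mathbb{N}$. If $\mathcal{L}$ is $\Theta(f(n))$ and $\mathcal{L}'$ is $\Theta(g(n))$, then the vertical sum $\mathcal{L}\oplus_v\mathcal{L}'$ and the horizontal sum $\mathcal{L}\oplus_h\mathcal{L}'$ are both $\Theta(f(n)+g(n))$.
   Context: A lattice means a partially ordered set $(\mathcal{L},\sqsubseteq)$ with least element $\bot$ in which any two elements have a least upper bound $\sqcup$; $\bigsqcup S$ denotes the least upper bound of a finite set ($\bigsqcup\emptyset=\bot$). Let $\mathcal{L}\uplus\mathcal{L}'=\{0\}\times\mathcal{L}\cup\{1\}\times\mathcal{L}'$. The vertical sum $\mathcal{L}\oplus_v\mathcal{L}'$ has elements $\mathcal{L}\uplus\mathcal{L}'$ with $\ell\sqsubseteq\ell'$ iff either $\ell=(0,\jmath)$ and $\ell'=(1,\jmath')$, or $\ell=(i,\jmath)$, $\ell'=(i,\jmath')$ and $\jmath\sqsubseteq\jmath'$ (i.e. $\mathcal{L}'$ placed on top of $\mathcal{L}$). The horizontal sum $\mathcal{L}\oplus_h\mathcal{L}'$ has elements $\{0,1\}\cup(\mathcal{L}\uplus\mathcal{L}')$ (with $0,1$ fresh elements) and $\ell\sqsubseteq\ell'$ iff $\ell=0$, or $\ell'=1$, or $\ell=(i,\jmath)$, $\ell'=(i,\jmath')$ and $\jmath\sqsubseteq\jmath'$ (i.e. $\mathcal{L}$ and $\mathcal{L}'$ side by side with a new bottom $0$ and new top $1$). The closure set of a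 finite $S$ is $C(S)=\{\bigsqcup S' : S'\subseteq S\}$, $CS_{\mathcal{L}}(n)=\max\{|C(S)| : S\subseteq\mathcal{L}\text{ finite}, |S|\le n\}$. For $f,g:\mathbb{N}\to\mathbb{N}$, $f$ is $O(g)$ (resp. $\Omega(g)$) iff there exist $N_0\in\mathbb{N}$ and rational $C>0$ with $f(n)\le Cg(n)$ (resp. $f(n)\ge Cg(n)$) for all $n\ge N_0$; $\Theta$ means both. A lattice is $\Theta(f(n))$ iff its $CS$ is. *)

From mathcomp Require Import all_boot all_order all_algebra.
From Stdlib Require Import ClassicalEpsilon.
Set Implicit Arguments. Unset Strict Implicit. Unset Printing Implicit Defensive.
Import Order.TTheory GRing.Theory Num.Theory.

Definition is_lub {T : Type} (le : T -> T -> Prop) (x y z : T) : Prop :=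
  le x z /\ le y z /\ (forall w, le x w -> le y w -> le z w).

Definition is_lattice {T : Type} (le : T -> T -> Prop) (bot : T) : Prop :=
  [/\ (forall x, le x x),
      (forall x y, le x y -> le y x -> x = y),
      (forall x y z, le x y -> le y z -> le x z),
      (forall x, le bot x)
    & (forall x y, exists z, is_lub le x y z)].

Definition join {T : Type} (le : T -> T -> Prop) (bot : T) (x y : T) : T :=
  epsilon (inhabits bot) (is_lub le x y).

Definition bigjoin {T : Type} (le : T -> T -> Prop) (bot : T) (s : seq T) : T :=
  foldr (join le bot) bot s.

Fixpoint powerseq {T : Type} (s : seq T) : seq (seq T) :=
  match s with
  | [::] => [:: [::]]
  | x :: s' => let p := powerseq s' in p ++ map (cons x) p
  end.

Definition closure_card {T : eqType} (le : T -> T -> Prop) (bot : T) (S : seq T) : nat :=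
  size (undup (map (bigjoin le bot) (powerseq S))).

Definition CS_attained {T : eqType} (le : T -> T -> Prop) (bot : T) (n k : nat) : bool :=
  if excluded_middle_informative
       (exists S : seq T, [/\ uniq S, size S <= n & closure_card le bot S = k])
  then true else false.

(* CS_L(n) = max { |C(S)| : |S| <= n }; since |C(S)| <= 2^|S| <= 2^n the
   maximum ranges over k <= 2^n. *)
Definition CS {T : eqType} (le : T -> T -> Prop) (bot : T) (n : nat) : nat :=
  \max_(k < (2 ^ n).+1 | CS_attained le bot n k) k.

Definition bigO (f g : nat -> nat) : Prop :=
  exists (N0 : nat) (C : rat), (0 < C)%R /\
    forall n, (N0 <= n)%N -> (((f n)%:R : rat) <= C * (g n)%:R)%R.

Definition bigOmega (f g : nat -> nat) : Prop :=
  exists (N0 : nat) (C : rat), (0 < C)%R /\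
    forall n, (N0 <= n)%N -> (C * (g n)%:R <= ((f n)%:R : rat))%R.

Definition bigTheta (f g : nat -> nat) : Prop := bigO f g /\ bigOmega f g.

(* L ⊎ L' is the sum type T + T' (inl = (0,_), inr = (1,_)). *)
Definition vle {T T' : Type} (le : T -> T -> Prop) (le' : T' -> T' -> Prop)
  (x y : T + T') : Prop :=
  match x, y with
  | inl a, inl b => le a b
  | inr a, inr b => le' a b
  | inl _, inr _ => True
  | inr _, inl _ => False
  end.

Definition vbot {T T' : Type} (bot : T) : T + T' := inl bot.

(* Horizontal sum carrier: bool + (T + T'), where inl false is the fresh
   bottom 0 and inl true is the fresh top 1. *)
Definition h0 {T T' : Type} : bool + (T + T') := inl false.
Definition h1 {T T' : Type} : bool + (T + T') := inl true.

Definition hle {T T' : Type} (le : T -> T -> Prop) (le' : T' -> T' -> Prop)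
  (x y : bool + (T + T')) : Prop :=
  x = h0 \/ y = h1 \/
  match x, y with
  | inr (inl a), inr (inl b) => le a b
  | inr (inr a), inr (inr b) => le' a b
  | _, _ => False
  end.

(* Every join of a subfamily of S in either sum is one of the fresh elements
   0, 1 of the horizontal sum, or the image of the join in L of its L-part, or
   the image of the join in L' of its L'-part.  Hence |C(S)| <= 2 + |C(S ∩ L)| + |C(S ∩ L')| and
   CS of the sum is at most 2 + CS_L + CS_L'.  Conversely L and L' embed into
   both sums preserving nonempty joins, so CS_L and CS_L' are at most CS of the
   sum.  As CS >= 1, CS of the sum lies between (CS_L + CS_L') / 2 and
   3 (CS_L + CS_L'), and Theta bounds add. *)

From Pilot Require Import Defs.
From mathcomp Require Import all_boot all_order all_algebra.
From Stdlib Require Import ClassicalEpsilon.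
From mathcomp Require Import lra zify.
Set Implicit Arguments. Unset Strict Implicit. Unset Printing Implicit Defensive.
Import Order.TTheory GRing.Theory Num.Theory.

Lemma is_lub_r (T : Type) (le : T -> T -> Prop) x y :
  le y y -> le x y -> is_lub le x y y.
Proof. by move=> leyy lexy; split=> // [] [] w. Qed.

Lemma is_lub_l (T : Type) (le : T -> T -> Prop) x y :
  le x x -> le y x -> is_lub le x y x.
Proof. by move=> lexx leyx; split=> // [] [] w. Qed.

Lemma is_lubC (T : Type) (le : T -> T -> Prop) x y z :
  is_lub le x y z -> is_lub le y x z.
Proof. by case=> lexz [leyz lub_z]; do 2!split=> //; move=> w /[swap]; apply: lub_z. Qed.

Section Lattice.

Variables (T : Type) (le : T -> T -> Prop) (bot : T).
Hypothesis HL : is_lattice le bot.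

Lemma join_lub x y : is_lub le x y (join le bot x y).
Proof.
case: HL => _ _ _ _ /(_ x y) lub_xy.
exact: epsilon_spec (inhabits bot) (is_lub le x y) lub_xy.
Qed.

Lemma join_unique x y z : is_lub le x y z -> join le bot x y = z.
Proof.
case: HL => _ anti _ _ _ [lexz [leyz lub_z]].
have [lexj [leyj lub_j]] := join_lub x y.
by apply: anti; [apply: lub_j | apply: lub_z].
Qed.

Lemma join_eq_r x y : le x y -> join le bot x y = y.
Proof. by case: HL => refl _ _ _ _ lexy; apply/join_unique/is_lub_r. Qed.

Lemma join_eq_l x y : le y x -> join le bot x y = x.
Proof. by case: HL => refl _ _ _ _ leyx; apply/join_unique/is_lub_l. Qed.

Lemma join_botr x : join le bot x bot = x.
Proof. by case: HL => _ _ _ lebot _; apply: join_eq_l. Qed.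

End Lattice.

Section JoinEmbedding.

Variables (A B : Type) (leA : A -> A -> Prop) (botA : A) (leB : B -> B -> Prop).
Hypothesis HA : is_lattice leA botA.
Variable i : A -> B.
Hypothesis i_le : forall x y, leB (i x) (i y) <-> leA x y.
Hypothesis i_upper :
  forall x w, leB (i x) w -> (exists w', w = i w') \/ (forall y, leB (i y) w).

Lemma lub_embed x y : is_lub leB (i x) (i y) (i (join leA botA x y)).
Proof.
have [lexj [leyj lub_j]] := join_lub HA x y.
split; first exact/i_le.
split; first exact/i_le.
move=> w lexw leyw; have [[w' eq_w]|below_w] := i_upper lexw; last exact: below_w.
by move: lexw leyw; rewrite eq_w => /i_le lexw' /i_le leyw'; apply/i_le/lub_j.
Qed.

Variable botB : B.
Hypothesis HB : is_lattice leB botB.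

Lemma join_embed x y : join leB botB (i x) (i y) = i (join leA botA x y).
Proof. exact/(join_unique HB)/lub_embed. Qed.

Lemma bigjoin_embed x s :
  bigjoin leB botB (map i (x :: s)) = i (bigjoin leA botA (x :: s)).
Proof.
elim: s x => [|y s IH] x /=; first by rewrite !join_botr.
by rewrite -join_embed -IH.
Qed.

End JoinEmbedding.

Lemma mem_powerseq_nil (T : eqType) (S : seq T) : [::] \in powerseq S.
Proof. by elim: S => //= x S IH; rewrite mem_cat IH. Qed.

Lemma size_powerseq (T : Type) (S : seq T) : size (powerseq S) = 2 ^ size S.
Proof. by elim: S => //= x S IH; rewrite size_cat size_map IH expnS mul2n addnn. Qed.

Lemma powerseq_map (A B : Type) (f : A -> B) (S : seq A) :
  powerseq (map f S) = map (map f) (powerseq S).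
Proof. by elim: S => //= x S IH; rewrite IH map_cat -!map_comp. Qed.

Lemma mem_powerseq_pmap (A B : eqType) (p : A -> option B) (S s : seq A) :
  s \in powerseq S -> pmap p s \in powerseq (pmap p S).
Proof.
elim: S s => [|x S IH] s /=; first by rewrite inE => /eqP ->.
rewrite mem_cat => /orP [/IH ps_s | /mapP [t /IH ps_t ->]] /=.
  by case: (p x) => //= y; rewrite mem_cat ps_s.
by case: (p x) => //= y; rewrite mem_cat map_f ?orbT.
Qed.

Section ClosureCard.

Variables (T : eqType) (le : T -> T -> Prop) (bot : T).

Lemma closure_card_le_exp S : closure_card le bot S <= 2 ^ size S.
Proof. by rewrite -size_powerseq -(size_map (bigjoin le bot)) size_undup. Qed.

Lemma closure_card_le_CS n S :
  uniq S -> size S <= n -> closure_card le bot S <= CS le bot n.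
Proof.
move=> uS leSn.
have ltS : closure_card le bot S < (2 ^ n).+1.
  by rewrite ltnS (leq_trans (closure_card_le_exp S)) // leq_pexp2l.
apply: (@leq_bigmax_cond _ _ (fun k : 'I__ => nat_of_ord k) (Ordinal ltS)).
by rewrite /CS_attained; case: excluded_middle_informative => // -[]; exists S.
Qed.

Lemma CS_le_bound n k :
  (forall S, uniq S -> size S <= n -> closure_card le bot S <= k) ->
  CS le bot n <= k.
Proof.
move=> bound; apply/bigmax_leqP => j.
rewrite /CS_attained; case: excluded_middle_informative => // -[S [uS leSn eq_j]] _.
by rewrite -eq_j; exact: bound.
Qed.

Lemma CS_gt0 n : 0 < CS le bot n.
Proof. exact: (@closure_card_le_CS n [::]). Qed.

End ClosureCard.

Section ClosureEmbedding.

Variables (A B : eqType) (leA : A -> A -> Prop) (botA : A).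
Variables (leB : B -> B -> Prop) (botB : B).
Hypotheses (HA : is_lattice leA botA) (HB : is_lattice leB botB).
Variable i : A -> B.
Hypothesis i_le : forall x y, leB (i x) (i y) <-> leA x y.
Hypothesis i_upper :
  forall x w, leB (i x) w -> (exists w', w = i w') \/ (forall y, leB (i y) w).
Hypothesis i_bot : forall x, i x = botB -> x = botA.

Lemma embed_inj : injective i.
Proof.
case: HA => refl anti _ _ _ x y eq_ixy.
by apply: anti; apply/i_le; rewrite eq_ixy; apply/i_le.
Qed.

Lemma closure_card_embed S :
  closure_card leA botA S <= closure_card leB botB (map i S).
Proof.
(* The empty join must be sent to [botB]: [i botA] need not be the bottom of B. *)
pose psi z := if z == botA then botB else i z.
have psi_inj : injective psi.
  move=> x y; rewrite /psi.
  case: eqP => [->|nx]; case: eqP => [->|ny] //.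
  - by move=> /esym /i_bot.
  - by move=> /i_bot.
  - exact: embed_inj.
rewrite /closure_card -(size_map psi); apply: uniq_leq_size.
  by rewrite map_inj_uniq ?undup_uniq.
move=> _ /mapP [z + ->]; rewrite mem_undup => /mapP [s ps_s ->].
rewrite mem_undup powerseq_map -map_comp /psi.
case: eqP => [_|]; first exact: (map_f _ (mem_powerseq_nil _)).
case: s ps_s => [|x s] ps_s // _.
by rewrite -(bigjoin_embed HA i_le i_upper HB); apply: (map_f (fun s => _ (map i s))).
Qed.

Lemma CS_embed n : CS leA botA n <= CS leB botB n.
Proof.
apply: CS_le_bound => S uS leSn.
apply: leq_trans (closure_card_embed S) (closure_card_le_CS _ _ _ _).
  by rewrite map_inj_uniq //; apply: embed_inj.
by rewrite size_map.
Qed.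

End ClosureEmbedding.

Lemma closure_card_cover (A B C : eqType) (leA : A -> A -> Prop) (botA : A)
    (leB : B -> B -> Prop) (botB : B) (leC : C -> C -> Prop) (botC : C)
    (E : seq A) (pB : A -> option B) (iB : B -> A) (pC : A -> option C) (iC : C -> A) :
    (forall s, [\/ bigjoin leA botA s \in E,
                   bigjoin leA botA s = iB (bigjoin leB botB (pmap pB s))
                 | bigjoin leA botA s = iC (bigjoin leC botC (pmap pC s))]) ->
  forall S, closure_card leA botA S <=
    size E + closure_card leB botB (pmap pB S) + closure_card leC botC (pmap pC S).
Proof.
move=> cover S; rewrite /closure_card -(size_map iB) -(size_map iC) -!size_cat.
apply: uniq_leq_size; first exact: undup_uniq.
move=> x; rewrite mem_undup => /mapP [s ps_s ->].
rewrite !mem_cat; case: (cover s) => [-> // | -> | ->].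
  by rewrite map_f ?orbT // mem_undup map_f // mem_powerseq_pmap.
by rewrite map_f ?orbT // mem_undup map_f // mem_powerseq_pmap.
Qed.

Lemma CS_le_cover (A B C : eqType) (leA : A -> A -> Prop) (botA : A)
    (leB : B -> B -> Prop) (botB : B) (leC : C -> C -> Prop) (botC : C)
    (E : seq A) (pB : A -> option B) (iB : B -> A) (pC : A -> option C) (iC : C -> A) :
    ocancel pB iB -> ocancel pC iC ->
    (forall s, [\/ bigjoin leA botA s \in E,
                   bigjoin leA botA s = iB (bigjoin leB botB (pmap pB s))
                 | bigjoin leA botA s = iC (bigjoin leC botC (pmap pC s))]) ->
  forall n, CS leA botA n <= size E + CS leB botB n + CS leC botC n.
Proof.
move=> pBK pCK cover n; apply: CS_le_bound => S uS leSn.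
apply: leq_trans (closure_card_cover cover S) _.
have size_pmap_le p : size (pmap p S) <= n.
  by rewrite size_pmap (leq_trans (count_size _ _)).
by rewrite -!addnA leq_add2l leq_add // closure_card_le_CS // ?(pmap_uniq pBK) ?(pmap_uniq pCK).
Qed.

Definition lproj (T T' : Type) (x : T + T') : option T :=
  if x is inl a then Some a else None.
Definition rproj (T T' : Type) (x : T + T') : option T' :=
  if x is inr b then Some b else None.

Section VerticalSum.

Variables (T T' : Type) (le : T -> T -> Prop) (bot : T).
Variables (le' : T' -> T' -> Prop) (bot' : T').
Hypotheses (HL : is_lattice le bot) (HL' : is_lattice le' bot').

Local Notation vle := (vle le le').
Local Notation vbot := (vbot bot : T + T').

Lemma vle_inl x y : vle (inl x) (inl y) <-> le x y.
Proof. by []. Qed.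

Lemma vle_inr x y : vle (inr x) (inr y) <-> le' x y.
Proof. by []. Qed.

Lemma vle_upper_inl x w :
  vle (inl x) w -> (exists w', w = inl w') \/ (forall y, vle (inl y) w).
Proof. by case: w => [w'|w'] _; [left; exists w' | right]. Qed.

Lemma vle_upper_inr x w :
  vle (inr x) w -> (exists w', w = inr w') \/ (forall y, vle (inr y) w).
Proof. by case: w => // w' _; left; exists w'. Qed.

Lemma vsum_lattice : is_lattice vle vbot.
Proof.
case: HL => refl anti trans lebot _; case: HL' => refl' anti' trans' _ _.
split.
- by case.
- by case=> x [] y //= lexy leyx; congr (_ _); [apply: anti | apply: anti'].
- by case=> x [] y [] z //=; [apply: trans | apply: trans'].
- by case.
case=> x [] y.
- by exists (inl (join le bot x y)); apply: (lub_embed HL vle_inl vle_upper_inl).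
- by exists (inr y); apply: is_lub_r.
- by exists (inr x); apply: is_lub_l.
- by exists (inr (join le' bot' x y)); apply: (lub_embed HL' vle_inr vle_upper_inr).
Qed.

Lemma bigjoin_vsum s :
  bigjoin vle vbot s =
  if pmap (@rproj T T') s is [::] then inl (bigjoin le bot (pmap (@lproj T T') s))
  else inr (bigjoin le' bot' (pmap (@rproj T T') s)).
Proof.
have join_inl := join_embed HL vle_inl vle_upper_inl vsum_lattice.
have join_inr := join_embed HL' vle_inr vle_upper_inr vsum_lattice.
elim: s => [|[x|x] s IH] //=; rewrite IH.
  by case: (pmap (@rproj T T') s) => [|y sr]; rewrite ?join_inl ?(join_eq_r vsum_lattice).
case: (pmap (@rproj T T') s) => [|y sr]; last by rewrite join_inr.
by rewrite (join_eq_l vsum_lattice) ?join_botr.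
Qed.

End VerticalSum.

Section VerticalSumCS.

Variables (T T' : eqType) (le : T -> T -> Prop) (bot : T).
Variables (le' : T' -> T' -> Prop) (bot' : T').
Hypotheses (HL : is_lattice le bot) (HL' : is_lattice le' bot').

Lemma CS_vsum_le n :
  CS (vle le le') (vbot bot) n <= CS le bot n + CS le' bot' n.
Proof.
have cover s : [\/ bigjoin (vle le le') (vbot bot) s \in [::],
    bigjoin (vle le le') (vbot bot) s = inl (bigjoin le bot (pmap (@lproj T T') s))
  | bigjoin (vle le le') (vbot bot) s = inr (bigjoin le' bot' (pmap (@rproj T T') s))].
  rewrite (bigjoin_vsum HL HL').
  by case: (pmap (@rproj T T') s) => [|y sr]; [apply: Or32 | apply: Or33].
have lprojK : ocancel (@lproj T T') inl by case.
have rprojK : ocancel (@rproj T T') inr by case.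
exact: CS_le_cover lprojK rprojK cover n.
Qed.

Lemma CS_vsum_ge_l n : CS le bot n <= CS (vle le le') (vbot bot) n.
Proof.
apply: (CS_embed HL (vsum_lattice HL HL') (@vle_inl _ _ le le')).
- exact: vle_upper_inl.
- by move=> x [].
Qed.

Lemma CS_vsum_ge_r n : CS le' bot' n <= CS (vle le le') (vbot bot) n.
Proof.
apply: (CS_embed HL' (vsum_lattice HL HL') (@vle_inr _ _ le le')).
- exact: vle_upper_inr.
- by [].
Qed.

End VerticalSumCS.

Section HorizontalSum.

Variables (T T' : Type) (le : T -> T -> Prop) (bot : T).
Variables (le' : T' -> T' -> Prop) (bot' : T').
Hypotheses (HL : is_lattice le bot) (HL' : is_lattice le' bot').

Local Notation hle := (hle le le').
Local Notation h0 := (h0 : bool + (T + T')).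
Local Notation h1 := (h1 : bool + (T + T')).
Local Notation hinl a := (inr (inl a) : bool + (T + T')).
Local Notation hinr b := (inr (inr b) : bool + (T + T')).

Lemma hleE x y :
  hle x y <->
  match x, y with
  | inl false, _ | _, inl true => True
  | inr (inl a), inr (inl b) => le a b
  | inr (inr a), inr (inr b) => le' a b
  | _, _ => False
  end.
Proof.
rewrite /hle /Defs.h0 /Defs.h1; split.
  by case: x => [[]|[a|a]]; case: y => [[]|[b|b]] // [] // [].
by case: x => [[]|[a|a]]; case: y => [[]|[b|b]] //=; auto.
Qed.

Lemma hle0x x : hle h0 x.
Proof. by left. Qed.

Lemma hlex1 x : hle x h1.
Proof. by right; left. Qed.

Lemma hle_inl x y : hle (hinl x) (hinl y) <-> le x y.
Proof. exact: hleE. Qed.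

Lemma hle_inr x y : hle (hinr x) (hinr y) <-> le' x y.
Proof. exact: hleE. Qed.

Lemma hle_upper_inl x w :
  hle (hinl x) w -> (exists w', w = hinl w') \/ (forall y, hle (hinl y) w).
Proof.
move=> /hleE; case: w => [[]|[w'|w']] // _; last by left; exists w'.
by right=> y; apply: hlex1.
Qed.

Lemma hle_upper_inr x w :
  hle (hinr x) w -> (exists w', w = hinr w') \/ (forall y, hle (hinr y) w).
Proof.
move=> /hleE; case: w => [[]|[w'|w']] // _; last by left; exists w'.
by right=> y; apply: hlex1.
Qed.

Lemma hlub_inl_inr x y : is_lub hle (hinl x) (hinr y) h1.
Proof.
split; first exact: hlex1.
split; first exact: hlex1.
by move=> w /hleE lexw /hleE leyw; apply/hleE; move: lexw leyw; case: w => [[]|[]].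
Qed.

Lemma hsum_lattice : is_lattice hle h0.
Proof.
case: HL => refl anti trans _ _; case: HL' => refl' anti' trans' _ _.
have hrefl x : hle x x by apply/hleE; case: x => [[]|[a|a]].
split=> //.
- move=> x y /hleE lexy /hleE leyx; move: lexy leyx.
  case: x => [[]|[a|a]]; case: y => [[]|[b|b]] //= lexy leyx.
    by rewrite (anti _ _ lexy leyx).
  by rewrite (anti' _ _ lexy leyx).
- move=> x y z /hleE lexy /hleE leyz; apply/hleE; move: lexy leyz.
  by case: x => [[]|[a|a]]; case: y => [[]|[b|b]]; case: z => [[]|[c|c]] //=;
    [apply: trans | apply: trans'].
- exact: hle0x.
case=> [[]|[a|a]] y.
- by exists h1; apply/is_lub_l/hlex1.
- by exists y; apply/is_lub_r/hle0x.
- case: y => [[]|[b|b]].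
  + by exists h1; apply/is_lub_r/hlex1.
  + by exists (hinl a); apply/is_lub_l/hle0x.
  + by exists (hinl (join le bot a b)); apply: (lub_embed HL hle_inl hle_upper_inl).
  + by exists h1; apply: hlub_inl_inr.
case: y => [[]|[b|b]].
- by exists h1; apply/is_lub_r/hlex1.
- by exists (hinr a); apply/is_lub_l/hle0x.
- by exists h1; apply/is_lubC/hlub_inl_inr.
by exists (hinr (join le' bot' a b)); apply: (lub_embed HL' hle_inr hle_upper_inr).
Qed.

End HorizontalSum.

Definition hlproj (T T' : Type) (x : bool + (T + T')) : option T :=
  if x is inr (inl a) then Some a else None.
Definition hrproj (T T' : Type) (x : bool + (T + T')) : option T' :=
  if x is inr (inr b) then Some b else None.

Section HorizontalSumCS.

Variables (T T' : eqType) (le : T -> T -> Prop) (bot : T).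
Variables (le' : T' -> T' -> Prop) (bot' : T').
Hypotheses (HL : is_lattice le bot) (HL' : is_lattice le' bot').

Local Notation hle := (hle le le').
Local Notation h0 := (h0 : bool + (T + T')).
Local Notation h1 := (h1 : bool + (T + T')).
Local Notation hinl a := (inr (inl a) : bool + (T + T')).
Local Notation hinr b := (inr (inr b) : bool + (T + T')).

Lemma bigjoin_hsum s :
  bigjoin hle h0 s =
  if h1 \in s then h1 else
  match pmap (@hlproj T T') s, pmap (@hrproj T T') s with
  | [::], [::] => h0
  | sl, [::] => hinl (bigjoin le bot sl)
  | [::], sr => hinr (bigjoin le' bot' sr)
  | _, _ => h1
  end.
Proof.
have HH := hsum_lattice HL HL'.
have join_x1 x : join hle h0 x h1 = h1 by apply/(join_eq_r HH)/hlex1.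
have join_inl := join_embed HL (@hle_inl _ _ le le') (@hle_upper_inl _ _ le le') HH.
have join_inr := join_embed HL' (@hle_inr _ _ le le') (@hle_upper_inr _ _ le le') HH.
elim: s => [|[[]|[a|a]] s IH]; first by rewrite in_nil.
all: rewrite in_cons /=.
- by apply/(join_eq_l HH)/hlex1.
- by rewrite IH; apply/(join_eq_r HH)/hle0x.
- rewrite IH; case: (h1 \in s); first exact: join_x1.
  case: (pmap (@hlproj T T') s) => [|y sl]; case: (pmap (@hrproj T T') s) => [|z sr];
    rewrite /= ?join_x1 ?join_inl //.
  + by rewrite (join_eq_l HH) ?join_botr //; apply: hle0x.
  + exact: (join_unique HH (hlub_inl_inr _ _ _ _)).
rewrite IH; case: (h1 \in s); first exact: join_x1.
case: (pmap (@hlproj T T') s) => [|y sl]; case: (pmap (@hrproj T T') s) => [|z sr];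
  rewrite /= ?join_x1 ?join_inr //.
- by rewrite (join_eq_l HH) ?join_botr //; apply: hle0x.
- exact/(join_unique HH)/is_lubC/hlub_inl_inr.
Qed.

Lemma CS_hsum_le n :
  CS hle h0 n <= 2 + (CS le bot n + CS le' bot' n).
Proof.
have cover s : [\/ bigjoin hle h0 s \in [:: h0; h1],
    bigjoin hle h0 s = hinl (bigjoin le bot (pmap (@hlproj T T') s))
  | bigjoin hle h0 s = hinr (bigjoin le' bot' (pmap (@hrproj T T') s))].
  rewrite bigjoin_hsum; case: (h1 \in s); first by apply: Or31; rewrite !inE eqxx orbT.
  case: (pmap (@hlproj T T') s) => [|y sl]; case: (pmap (@hrproj T T') s) => [|z sr].
  - by apply: Or31; rewrite inE eqxx.
  - exact: Or33.
  - exact: Or32.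
  - by apply: Or31; rewrite !inE eqxx orbT.
have hlprojK : ocancel (@hlproj T T') (fun a => hinl a) by case=> [|[]].
have hrprojK : ocancel (@hrproj T T') (fun b => hinr b) by case=> [|[]].
by rewrite addnA; exact: CS_le_cover hlprojK hrprojK cover n.
Qed.

Lemma CS_hsum_ge_l n : CS le bot n <= CS hle h0 n.
Proof.
apply: (CS_embed HL (hsum_lattice HL HL') (@hle_inl _ _ le le')).
- exact: hle_upper_inl.
- by [].
Qed.

Lemma CS_hsum_ge_r n : CS le' bot' n <= CS hle h0 n.
Proof.
apply: (CS_embed HL' (hsum_lattice HL HL') (@hle_inr _ _ le le')).
- exact: hle_upper_inr.
- by [].
Qed.

End HorizontalSumCS.

Section Asymptotics.

Local Open Scope ring_scope.

Lemma bigO_add (a b f g : nat -> nat) :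
  bigO a f -> bigO b g -> bigO (fun n => a n + b n)%N (fun n => f n + g n)%N.
Proof.
move=> [N1 [C1 [C1_gt0 leCf]]] [N2 [C2 [C2_gt0 leCg]]].
exists (maxn N1 N2), (C1 + C2); split=> [|n]; first lra.
rewrite geq_max => /andP [/leCf af /leCg bg]; rewrite !natrD.
have f_ge0 : 0 <= (f n)%:R :> rat by []. have g_ge0 : 0 <= (g n)%:R :> rat by [].
nra.
Qed.

Lemma bigOmega_add (a b f g : nat -> nat) :
  bigOmega a f -> bigOmega b g ->
  bigOmega (fun n => a n + b n)%N (fun n => f n + g n)%N.
Proof.
move=> [N1 [C1 [C1_gt0 leCf]]] [N2 [C2 [C2_gt0 leCg]]].
exists (maxn N1 N2), (Num.min C1 C2); split=> [|n]; first by rewrite lt_min C1_gt0.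
rewrite geq_max => /andP [/leCf af /leCg bg]; rewrite !natrD.
have f_ge0 : 0 <= (f n)%:R :> rat by []. have g_ge0 : 0 <= (g n)%:R :> rat by [].
have le_min1 : Num.min C1 C2 <= C1 by rewrite ge_min lexx.
have le_min2 : Num.min C1 C2 <= C2 by rewrite ge_min lexx orbT.
nra.
Qed.

Lemma bigO_trans (h k f : nat -> nat) : bigO h k -> bigO k f -> bigO h f.
Proof.
move=> [N1 [C1 [C1_gt0 leCk]]] [N2 [C2 [C2_gt0 leCf]]].
exists (maxn N1 N2), (C1 * C2); split=> [|n]; first exact: mulr_gt0.
rewrite geq_max => /andP [/leCk hk /leCf kf]; nra.
Qed.

Lemma bigOmega_trans (h k f : nat -> nat) :
  bigOmega h k -> bigOmega k f -> bigOmega h f.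
Proof.
move=> [N1 [C1 [C1_gt0 leCk]]] [N2 [C2 [C2_gt0 leCf]]].
exists (maxn N1 N2), (C1 * C2); split=> [|n]; first exact: mulr_gt0.
rewrite geq_max => /andP [/leCk hk /leCf kf]; nra.
Qed.

Lemma bigO_of_leq (h k : nat -> nat) K :
  (forall n, h n <= K * k n)%N -> bigO h k.
Proof.
move=> le_hk; exists 0%N, (K%:R + 1); split=> [|n _]; first by rewrite ltr_wpDl.
have := le_hk n; rewrite -(ler_nat rat) natrM.
have k_ge0 : 0 <= (k n)%:R :> rat by [].
nra.
Qed.

Lemma bigOmega_of_leq (h k : nat -> nat) K :
  (forall n, k n <= K * h n)%N -> bigOmega h k.
Proof.
move=> le_kh; exists 0%N, (K%:R + 1)^-1.
have K1_gt0 : 0 < K%:R + 1 :> rat by rewrite ltr_wpDl.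
split=> [|n _]; first by rewrite invr_gt0.
rewrite mulrC ler_pdivrMr //.
have := le_kh n; rewrite -(ler_nat rat) natrM.
have h_ge0 : 0 <= (h n)%:R :> rat by [].
nra.
Qed.

End Asymptotics.

Lemma bigTheta_of_sum_bounds (h a b f g : nat -> nat) K :
  bigTheta a f -> bigTheta b g ->
  (forall n, h n <= K * (a n + b n)) ->
  (forall n, a n <= h n) -> (forall n, b n <= h n) ->
  bigTheta h (fun n => f n + g n).
Proof.
move=> [Oa Wa] [Ob Wb] le_h le_ah le_bh; split.
  exact: bigO_trans (bigO_of_leq le_h) (bigO_add Oa Ob).
apply: bigOmega_trans (bigOmega_add Wa Wb).
by apply: (@bigOmega_of_leq _ _ 2) => n; rewrite mul2n -addnn leq_add.
Qed.

Theorem mainTheorem5 (T T' : eqType)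
  (le : T -> T -> Prop) (bot : T) (le' : T' -> T' -> Prop) (bot' : T')
  (HL : is_lattice le bot) (HL' : is_lattice le' bot')
  (f g : nat -> nat)
  (Hf : bigTheta (CS le bot) f) (Hg : bigTheta (CS le' bot') g) :
  bigTheta (CS (vle le le') (vbot bot)) (fun n => f n + g n) /\
  bigTheta (CS (hle le le') h0) (fun n => f n + g n).
Proof.
split.
  apply: (bigTheta_of_sum_bounds (K := 1) Hf Hg) => n.
  - by rewrite mul1n (CS_vsum_le HL HL').
  - exact: CS_vsum_ge_l HL HL' n.
  - exact: CS_vsum_ge_r HL HL' n.
apply: (bigTheta_of_sum_bounds (K := 3) Hf Hg) => n.
- apply: leq_trans (CS_hsum_le HL HL' n) _.
  by have := CS_gt0 le bot n; lia.
- exact: CS_hsum_ge_l HL HL' n.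
- exact: CS_hsum_ge_r HL HL' n.
Qed.
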